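(* Let $\{\lambda_j\}_{j\in\mathbb N}$ be a non-increasing sequence of non-negative reals with $\lambda_1=1$ and $\lim_{j\to\infty}\lambda_j=0$. Then the following are equivalent: (a) $\displaystyle\lim_{\varepsilon\to0}\frac{\ln\ln j(\varepsilon)}{\ln\ln\varepsilon^{-1}}=0$; (b) $\displaystyle\lim_{j\to\infty}\frac{\ln(\ln\frac1{\lambda_j})}{\ln(\ln j)}=\infty$; (c) for every $\delta>0$, $\displaystyle\lim_{\varepsilon\to0}\frac{\ln j(\varepsilon)}{(\ln\varepsilon^{-1})^{\delta}}=0$.
   Context: For $\varepsilon\in(0,1)$, $j(\varepsilon)=\max\{j\in\mathbb N:\lambda_j>\varepsilon^2\}$. If $\lambda_j=0$, $\ln\frac1{\lambda_j}$ is interpreted as $\infty$. *)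

From HB Require Import structures.
From mathcomp Require Import all_boot all_order all_algebra.
From mathcomp Require Import all_classical all_reals all_analysis.
Set Implicit Arguments. Unset Strict Implicit. Unset Printing Implicit Defensive.
Import Order.TTheory GRing.Theory Num.Theory.
Local Open Scope classical_set_scope.
Local Open Scope ring_scope.

(* The sequence lambda is indexed by nat, with lambda_j meaningful for j >= 1
   (the value at index 0 is irrelevant).
   jeps lam eps = max { j >= 1 : lam j > eps^2 } (chosen classically; the
   maximum exists under the standing hypotheses when 0 < eps < 1). *)
Definition jeps {R : realType} (lam : nat -> R) (eps : R) : nat :=
  xget 0%N [set n : nat | (1 <= n)%N /\ eps ^+ 2 < lam n /\
                          (forall m : nat, (1 <= m)%N -> eps ^+ 2 < lam m -> (m <= n)%N)].

(* ln (ln (1/lam_j)) / ln (ln j) as an extended real, with the convention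
   ln (1/0) = +oo, so the ratio is +oo when lam_j = 0. *)
Definition ratio_b {R : realType} (lam : nat -> R) (j : nat) : \bar R :=
  if lam j == 0 then +oo%E
  else (ln (ln (lam j)^-1) / ln (ln (j%:R)))%:E.

(* All three conditions are equivalent to

     for every d > 0, eventually  ln ln j(eps) <= d * ln ln (1/eps).

   For (a) this uses that ln ln n is bounded below on the naturals; (c) is
   the same statement after one more logarithm,
   since ln j <= (ln (1/eps))^delta iff ln ln j <= delta * ln ln (1/eps).
   For (b), j(eps) is the largest index with lam_j > eps^2: taking
   j = j(eps) gives ln (1/lam_j) < 2 ln (1/eps), and taking eps = lam_j gives
   j <= j(lam_j), which transfers the growth in both directions. *)

From HB Require Import structures.
From mathcomp Require Import all_boot all_order all_algebra.
From mathcomp Require Import all_classical all_reals all_analysis.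
From mathcomp Require Import lra.
Import Order.TTheory GRing.Theory Num.Theory.
Local Open Scope classical_set_scope.
Local Open Scope ring_scope.

Section Logarithms.
Context {R : realType}.

Lemma ln_gt0E (x : R) : (0 < ln x) = (1 < x).
Proof.
have [x0|x0] := leP x 0; last by rewrite -ln1 ltr_ln ?posrE.
by rewrite ln0 // ltxx ltNge (le_trans x0 ler01).
Qed.

Lemma ler_ln_ge1 {x y : R} : x <= y -> 1 <= y -> ln x <= ln y.
Proof.
move=> xy y1; have [x0|x0] := leP x 0; first by rewrite ln0 // ln_ge0.
by rewrite ler_ln ?posrE // (lt_le_trans _ y1).
Qed.

Lemma ln_cvgy : ln (x : R) @[x --> +oo] --> +oo.
Proof.
apply/cvgryPgt => A; near=> x.
have Ax : expR A < x by near: x; apply: nbhs_pinfty_gt; exact: num_real.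
by rewrite -(expRK A) ltr_ln ?posrE ?expR_gt0 // (lt_trans (expR_gt0 A)).
Unshelve. all: by end_near.
Qed.

Lemma lnV_cvgy : ln (x : R)^-1 @[x --> 0^'+] --> +oo.
Proof.
apply/cvgryPgt => A; have /cvgrNyPlt/(_ (- A)) := @lnNy R.
apply: filterS2 (nbhs_right_gt 0) => x x0.
by rewrite lnV ?posrE // ltrNr.
Qed.

Lemma lnlnV_cvgy : ln (ln (x : R)^-1) @[x --> 0^'+] --> +oo.
Proof. exact: cvg_comp lnV_cvgy ln_cvgy. Qed.

Lemma lnln_nat_cvgy : ln (ln (n%:R : R)) @[n --> \oo] --> +oo.
Proof. exact: cvg_comp _ _ (cvg_comp _ _ cvgr_idn ln_cvgy) ln_cvgy. Qed.

Lemma ln_nat_ge0 (n : nat) : 0 <= ln (n%:R : R).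
Proof. by case: n => [|n]; [rewrite ln0 | apply: ln_ge0; rewrite ler1n]. Qed.

Lemma lnln_nat_ge (n : nat) : ln (ln 2) <= ln (ln (n%:R : R)).
Proof.
have [n_le1|n_ge2] := leqP n 1.
  have ln2_le1 : ln (2 : R) <= 1.
    rewrite -[leRHS](expRK 1); apply: ler_ln_ge1; first exact: expR_ge1Dx.
    by rewrite ltW // pexpR_gt1.
  have -> : ln (ln (n%:R : R)) = 0 by rewrite ln0 // ln_le0 // lern1.
  exact: ln_le0.
have ln2_gt0 : 0 < ln (2 : R) by rewrite ln_gt0E ltr1n.
have ln_n_ge : ln (2 : R) <= ln n%:R.
  by rewrite ler_ln ?posrE ?ltr0n ?ler_nat // ltnW.
by rewrite ler_ln ?posrE // (lt_le_trans ln2_gt0).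
Qed.

Lemma ler_lnln_nat {m n : nat} : (m <= n)%N -> 1 <= ln (n%:R : R) ->
  ln (ln (m%:R : R)) <= ln (ln (n%:R : R)).
Proof.
move=> mn ln_n_ge1; apply: ler_ln_ge1 => //.
apply: ler_ln_ge1; first by rewrite ler_nat.
by case: n mn ln_n_ge1 => [|n] _; [rewrite ln0 // ler10 | rewrite ler1n].
Qed.

End Logarithms.

(* When [g] is eventually positive, [upper_littleo F f g] says that
   [limsup_F f / g <= 0]. *)
Definition upper_littleo {R : numDomainType} {T : Type} (F : set_system T)
    (f g : T -> R) :=
  forall d : R, 0 < d -> \forall x \near F, f x <= d * g x.

Section Ratios.
Context {R : realType} {T : Type} {F : set_system T} {FF : Filter F}.

Lemma upper_littleo_cvg0P (f g : T -> R) (m : R) :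
  (\forall x \near F, m <= f x) -> g @ F --> +oo ->
  (fun x => f x / g x) @ F --> 0 <-> upper_littleo F f g.
Proof.
move=> f_ge /cvgryPgt g_gt.
split=> [/cvgr0Pnorm_lt fg_cvg0 d d0 | f_small].
  near=> x.
  have g0 : 0 < g x by near: x; exact: g_gt.
  have : `|f x / g x| < d by near: x; exact: fg_cvg0.
  by move/(le_lt_trans (ler_norm _)); rewrite ltr_pdivrMr // => /ltW.
apply/cvgr0Pnorm_lt => c c0; near=> x.
have mf : m <= f x by near: x.
have fc : f x <= c / 2 * g x by near: x; apply: f_small; rewrite divr_gt0.
have g0 : 0 < g x by near: x; exact: g_gt.
have gm : - m / c < g x by near: x; exact: g_gt.
rewrite ltr_pdivrMr // in gm.
rewrite normrM normfV (gtr0_norm g0) ltr_pdivrMr // ltr_norml.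
apply/andP; split; nra.
Unshelve. all: by end_near.
Qed.

Lemma upper_littleo_ln_powRP (u v : T -> R) :
  (\forall x \near F, 0 <= u x) -> v @ F --> +oo ->
  (forall delta : R, 0 < delta -> (fun x => u x / v x `^ delta) @ F --> 0) <->
  upper_littleo F (fun x => ln (u x)) (fun x => ln (v x)).
Proof.
move=> u_ge0 v_cvgy; have /cvgryPgt v_gt := v_cvgy.
have /cvgryPgt lnv_gt := cvg_comp _ _ v_cvgy ln_cvgy.
split=> [u_small d d0 | lnu_small delta delta0].
  have /cvgr0Pnorm_lt/(_ 1 ltr01) := u_small d d0.
  apply: filter_app; near=> x => uv_lt1.
  have v1 : 1 < v x by near: x; exact: v_gt.
  have vd_ge1 : 1 <= v x `^ d by rewrite -(powRr0 (v x)) ler_powR ?ltW.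
  rewrite -ln_powR; apply: ler_ln_ge1 => //.
  move: uv_lt1 => /(le_lt_trans (ler_norm _)).
  by rewrite ltr_pdivrMr ?mul1r ?(lt_le_trans ltr01) // => /ltW.
apply/cvgr0Pnorm_lt => c c0; near=> x.
have u0 : 0 <= u x by near: x.
have v1 : 1 < v x by near: x; exact: v_gt.
have lnu : ln (u x) <= delta / 2 * ln (v x).
  by near: x; apply: lnu_small; rewrite divr_gt0.
have lnv : - (2 * ln c) / delta < ln (v x) by near: x; exact: lnv_gt.
have vd0 : 0 < v x `^ delta by rewrite powR_gt0 // (lt_trans ltr01).
rewrite ger0_norm ?divr_ge0 // ?ltW // ltr_pdivrMr //.
have [u_lt0|u_gt0|->] := ltgtP (u x) 0; first by rewrite ltNge u0 in u_lt0.
  rewrite -ltr_ln ?posrE ?mulr_gt0 // lnM ?posrE // ln_powR.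
  rewrite ltr_pdivrMr // in lnv; nra.
by rewrite mulr_gt0.
Unshelve. all: by end_near.
Qed.

End Ratios.

Section Jeps.
Context {R : realType} (lam : nat -> R).
Hypothesis lam1 : lam 1%N = 1.
Hypothesis lam_ge0 : forall j : nat, (1 <= j)%N -> 0 <= lam j.
Hypothesis lam_cvg0 : lam @ \oo --> 0.

Lemma jepsP (e : R) : 0 < e -> e < 1 ->
  [/\ (1 <= jeps lam e)%N, e ^+ 2 < lam (jeps lam e) &
      forall m, (1 <= m)%N -> e ^+ 2 < lam m -> (m <= jeps lam e)%N].
Proof.
move=> e0 e1.
have [N _ lam_small] : \forall n \near \oo, `|lam n| < e ^+ 2.
  by move/cvgr0Pnorm_lt : lam_cvg0; apply; rewrite exprn_gt0.
pose P m := (1 <= m)%N && (e ^+ 2 < lam m).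
have P1 : P 1%N by rewrite /P lam1 expr2; apply/andP; split => //; nra.
have P_le : forall m, P m -> (m <= N)%N.
  move=> m /andP[m1 em]; rewrite leqNgt; apply/negP => /ltnW/lam_small.
  by rewrite ger0_norm ?lam_ge0 // ltNge (ltW em).
have [n /andP[n1 en] n_max] := ex_maxnP (ex_intro P 1%N P1) P_le.
have : [set n | (1 <= n)%N /\ e ^+ 2 < lam n /\
    (forall m, (1 <= m)%N -> e ^+ 2 < lam m -> (m <= n)%N)] (jeps lam e).
  apply: xgetPex; exists n; split=> //; split=> // m m1 em.
  by apply: n_max; rewrite /P m1.
by move=> [? [? ?]]; split.
Qed.

Lemma ratio_b_cvgy_upper_littleo : ratio_b lam @ \oo --> +oo%E ->
  upper_littleo 0^'+ (fun e => ln (ln (jeps lam e)%:R)) (fun e => ln (ln e^-1)).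
Proof.
move=> /cvgeyPge ratio_big d d0.
have [J _ HJ] := ratio_big (2 / d).
have /cvgryPgt/(_ 0)[N _ HN] := @lnln_nat_cvgy R.
have /cvgryPgt lnlnV_gt := @lnlnV_cvgy R.
set M := maxn J N.
have lnlnM_gt0 : 0 < ln (ln (M%:R : R)) by apply: HN; rewrite /= leq_maxr.
near=> e.
have e0 : 0 < e by near: e; exact: nbhs_right_gt.
have e1 : e < 1 by near: e; exact: nbhs_right_lt.
have lnlnM_lt : ln (ln (M%:R : R)) / d < ln (ln e^-1).
  by near: e; exact: lnlnV_gt.
have ln2_lt : ln 2 < ln (ln e^-1) by near: e; exact: lnlnV_gt.
rewrite ltr_pdivrMr // in lnlnM_lt.
have [n1 lam_n _] := jepsP _ e0 e1.
set n := jeps lam e in n1 lam_n *.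
have [Mn|nM] := leqP M n; last first.
  have lnM_gt1 : 1 < ln (M%:R : R) by rewrite -ln_gt0E.
  by rewrite (le_trans (ler_lnln_nat (ltnW nM) (ltW lnM_gt1))) // mulrC ltW.
have lnln_n_gt0 : 0 < ln (ln (n%:R : R)).
  by apply: HN; rewrite /= (leq_trans (leq_maxr J N)).
have lam_n_gt0 : 0 < lam n by rewrite (lt_trans _ lam_n) ?exprn_gt0.
have := HJ n (leq_trans (leq_maxl J N) Mn).
rewrite /ratio_b (gt_eqF lam_n_gt0) lee_fin ler_pdivlMr // mulrAC.
rewrite ler_pdivrMr // => ratio_n.
have lnV_gt1 : 1 < ln e^-1.
  by rewrite -ln_gt0E (lt_trans _ ln2_lt) // ln_gt0E ltr1n.
(* [lam n > e ^+ 2] bounds [ln (lam n)^-1] by [2 * ln e^-1], while the growth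
   of [ratio_b] bounds it from below by a power of [ln n]. *)
have ln_lam_n : ln (lam n)^-1 <= 2 * ln e^-1.
  have -> : 2 * ln e^-1 = ln (e^-1 ^+ 2) by rewrite lnXn ?invr_gt0 // mulr_natl.
  rewrite ler_ln ?posrE ?exprn_gt0 ?invr_gt0 //.
  by rewrite exprVn lef_pV2 ?posrE ?exprn_gt0 // ltW.
have : ln (ln (lam n)^-1) <= ln 2 + ln (ln e^-1).
  rewrite -lnM ?posrE ?(lt_trans ltr01) ?ltr1n //.
  by apply: (ler_ln_ge1 ln_lam_n); lra.
nra.
Unshelve. all: by end_near.
Qed.

Lemma upper_littleo_ratio_b_cvgy :
  upper_littleo 0^'+ (fun e => ln (ln (jeps lam e)%:R)) (fun e => ln (ln e^-1)) ->
  ratio_b lam @ \oo --> +oo%E.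
Proof.
move=> jeps_small; apply/cvgeyPge => A.
set B := Num.max A 1.
have B_gt0 : 0 < B by rewrite lt_max ltr01 orbT.
have : \forall e \near 0^'+,
    e < 1 /\ ln (ln (jeps lam e)%:R) <= B^-1 * ln (ln e^-1).
  near=> e; split; near: e; first exact: nbhs_right_lt.
  by apply: jeps_small; rewrite invr_gt0.
(* Evaluate at [e := lam j], for which [j <= jeps lam (lam j)]. *)
rewrite near_withinE => /lam_cvg0 lam_small.
have /cvgryPgt/(_ 0)[N _ HN] := @lnln_nat_cvgy R.
near=> j.
have j_ge : (maxn N 1 <= j)%N by near: j; exists (maxn N 1).
have lnln_j_gt0 : 0 < ln (ln (j%:R : R)).
  by apply: HN; rewrite /= (leq_trans (leq_maxl N 1)).
have lam_j_small : 0 < lam j -> lam j < 1 /\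
    ln (ln (jeps lam (lam j))%:R) <= B^-1 * ln (ln (lam j)^-1).
  by near: j; exact: lam_small.
rewrite /ratio_b; have [_|lam_j_neq0] := eqVneq (lam j) 0; first by rewrite leey.
have lam_j_gt0 : 0 < lam j.
  by rewrite lt_def lam_j_neq0 lam_ge0 // (leq_trans (leq_maxr N 1)).
have [lam_j_lt1 lnln_jeps_le] := lam_j_small lam_j_gt0.
have [_ _ jeps_max] := jepsP _ lam_j_gt0 lam_j_lt1.
have j_le : (j <= jeps lam (lam j))%N.
  by apply: jeps_max; rewrite ?(leq_trans (leq_maxr N 1)) // expr2; nra.
have ln_jeps_gt1 : 1 < ln (jeps lam (lam j))%:R :> R.
  rewrite -ln_gt0E; apply: HN.
  by rewrite /= (leq_trans (leq_maxl N 1)) // (leq_trans j_ge).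
have := le_trans (ler_lnln_nat j_le (ltW ln_jeps_gt1)) lnln_jeps_le.
rewrite lee_fin ler_pdivlMr // ler_pdivlMl // => lnln_j_le.
apply: le_trans lnln_j_le; apply: ler_wpM2r; first exact: ltW.
by rewrite /B le_max lexx.
Unshelve. all: by end_near.
Qed.

End Jeps.

Theorem lemma2 (R : realType) (lam : nat -> R)
  (lam1 : lam 1%N = 1)
  (lam_ge0 : forall j : nat, (1 <= j)%N -> 0 <= lam j)
  (lam_noninc : forall i j : nat, (1 <= i)%N -> (i <= j)%N -> lam j <= lam i)
  (lam_cvg0 : lam @ \oo --> 0) :
  [<-> (fun eps : R => ln (ln ((jeps lam eps)%:R)) / ln (ln eps^-1))
           @ 0^'+ --> 0 ;
       ratio_b lam @ \oo --> +oo%E ;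
       forall delta : R, 0 < delta ->
         (fun eps : R => ln ((jeps lam eps)%:R) / (ln eps^-1) `^ delta)
           @ 0^'+ --> 0].
Proof.
have [a_small small_a] := upper_littleo_cvg0P (fun e => ln (ln (jeps lam e)%:R))
  (fun e => ln (ln e^-1)) _ (nearW _ (fun=> lnln_nat_ge _)) lnlnV_cvgy.
have [c_small small_c] := upper_littleo_ln_powRP (fun e => ln (jeps lam e)%:R)
  (fun e => ln e^-1) (nearW _ (fun=> ln_nat_ge0 _)) lnV_cvgy.
split; [|split].
- by move/a_small; exact: upper_littleo_ratio_b_cvgy.
- by move/(ratio_b_cvgy_upper_littleo _ lam1 lam_ge0 lam_cvg0); exact: small_c.
- by move/c_small/small_a.
Qed.
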